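(* Let $d\ge3$, let $V$ be a $d\times d$ correlation matrix (symmetric positive semi-definite with unit diagonal), let $X=(X_1,\dots,X_d)\sim N(0,V)$, and let $h(x)=\max_{1\le i\le d}x_i$. Then $E(h(X)^2)\le 6\ln d$ and $\mathrm{Var}(h(X))\ge d^{-15}/\sqrt{2\pi}$. *)

From Stdlib Require Import Reals.
Open Scope R_scope.

(* Vectors of R^d are represented as functions nat -> R (coordinates 0..d-1),
   d x d matrices as nat -> nat -> R. *)

Fixpoint rsum (n : nat) (f : nat -> R) : R :=
  match n with
  | O => 0
  | S m => rsum m f + f m
  end.

Fixpoint rprod (n : nat) (f : nat -> R) : R :=
  match n with
  | O => 1
  | S m => rprod m f * f m
  end.

(* h(x) = max_{0 <= i < d} x_i  (meaningful for d >= 1) *)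
Fixpoint vmax (n : nat) (x : nat -> R) : R :=
  match n with
  | O => x O
  | S m => Rmax (vmax m x) (x m)
  end.

Definition matvec (d : nat) (A : nat -> nat -> R) (z : nat -> R) : nat -> R :=
  fun i => rsum d (fun k => A i k * z k).

Definition correlation_matrix (d : nat) (V : nat -> nat -> R) : Prop :=
  (forall i j, (i < d)%nat -> (j < d)%nat -> V i j = V j i) /\
  (forall x : nat -> R, 0 <= rsum d (fun i => rsum d (fun j => x i * V i j * x j))) /\
  (forall i, (i < d)%nat -> V i i = 1).

Definition std_gauss_density (d : nat) (z : nat -> R) : R :=
  rprod d (fun i => exp (- (z i)^2 / 2) / sqrt (2 * PI)).

Definition improper_int (g : R -> R) (I : R) : Prop :=
  forall eps, 0 < eps -> exists M, forall a b, a <= -M -> M <= b ->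
    exists pr : Riemann_integrable g a b, Rabs (RiemannInt pr - I) < eps.

Definition vcons (t : R) (z : nat -> R) : nat -> R :=
  fun i => match i with O => t | S j => z j end.

(* iter_int n F I : the iterated improper integral of F over the first n
   coordinates (integrating coordinate 0 outermost) exists and equals I. *)
Fixpoint iter_int (n : nat) (F : (nat -> R) -> R) (I : R) : Prop :=
  match n with
  | O => I = F (fun _ => 0)
  | S m => exists g : R -> R,
      (forall t, iter_int m (fun z => F (vcons t z)) (g t)) /\ improper_int g I
  end.

(* gauss_expect d A f E : with Z ~ N(0, I_d) and X = A Z (so X ~ N(0, A A^T)),
   E = E[f(X)] = integral over R^d of f(A z) * phi_d(z) dz. *)
Definition gauss_expect (d : nat) (A : nat -> nat -> R) (f : (nat -> R) -> R) (E : R) : Prop :=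
  iter_int d (fun z => f (matvec d A z) * std_gauss_density d z) E.

From Coquelicot Require Import Coquelicot.
From Stdlib Require Import Reals Lra Lia IndefiniteDescription FunctionalExtensionality.
Open Scope R_scope.

(* Write X = A Z with Z standard normal, so that each X_i is standard normal
   (only the unit diagonal of V matters), and put L = 2 ln (2 d), s = sqrt L.

   Upper bound: the inequality u^2 <= 2 L (e^u - 1 - u) for u >= - L / 2, applied to
   u = ln (sum_i (e^(s X_i) + e^(- s X_i))) - L, gives
   h(X)^2 <= L - 2 + 2 e^(- L) sum_i (e^(s X_i) + e^(- s X_i)), and E e^(+- s X_i) = 2 d
   yields E h(X)^2 <= L <= 6 ln d.

   Lower bound: let c = s + 1 and Y = e^(c X_0). By the Cameron--Martin formula
   E[h(X) Y] = E Y * E h(X + c V_0), where V_0 is the first column of V, and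
   h(X + c V_0) >= X_0 + c; since E h(X) <= sqrt (E h(X)^2) <= s, this gives
   Cov(h(X), Y) >= E Y. Expanding E (h(X) - E h(X) - lam (Y - E Y))^2 >= 0 with
   lam = e^(-3 c^2 / 2) then gives Var h(X) >= e^(- c^2) >= d^(-15) / sqrt (2 PI).

   Expectations are iterated improper Riemann integrals. They exist because the
   integrands have at most exponential growth and are locally Lipschitz with
   exponentially growing constants, a class stable under integrating out one
   coordinate. The normalisation of the Gaussian density comes from the classical
   identity (int_0^x e^(-t^2) dt)^2 + int_0^1 e^(-x^2 (1 + t^2)) / (1 + t^2) dt = PI / 4. *)

(* Coquelicot states these for abstract normed modules, which does not unify
   with plain [R -> R] integrands. *)
Lemma continuous_of_ex_derive (f : R -> R) x : ex_derive f x -> continuous f x.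
Proof. apply (@ex_derive_continuous R_AbsRing R_NormedModule). Qed.

Lemma ex_RInt_cont (f : R -> R) a b : (forall x, continuous f x) -> ex_RInt f a b.
Proof. intros H; apply (@ex_RInt_continuous R_CompleteNormedModule); intros; apply H. Qed.

Lemma RInt_ext_R (f g : R -> R) a b :
  (forall x, Rmin a b < x < Rmax a b -> f x = g x) -> RInt f a b = RInt g a b.
Proof. apply (@RInt_ext R_CompleteNormedModule). Qed.

Lemma RInt_scal_R (f : R -> R) a b c :
  ex_RInt f a b -> RInt (fun t => c * f t) a b = c * RInt f a b.
Proof. apply (@RInt_scal R_CompleteNormedModule f a b c). Qed.

Lemma RInt_plus_R (f g : R -> R) a b : ex_RInt f a b -> ex_RInt g a b ->
  RInt (fun t => f t + g t) a b = RInt f a b + RInt g a b.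
Proof. apply (@RInt_plus R_CompleteNormedModule f g a b). Qed.

Lemma RInt_comp_lin_R (f : R -> R) u v a b : ex_RInt f (u * a + v) (u * b + v) ->
  RInt (fun y => u * f (u * y + v)) a b = RInt f (u * a + v) (u * b + v).
Proof. apply (@RInt_comp_lin R_CompleteNormedModule f u v a b). Qed.

Lemma RInt_Chasles_R (f : R -> R) a b c :
  (forall t, continuous f t) -> RInt f a b + RInt f b c = RInt f a c.
Proof. intros Hc; exact (RInt_Chasles f a b c (ex_RInt_cont _ _ _ Hc) (ex_RInt_cont _ _ _ Hc)). Qed.

Lemma RInt_derive_R (f F : R -> R) a b : (forall t, is_derive F t (f t)) ->
  (forall t, continuous f t) -> RInt f a b = F b - F a.
Proof.
  intros HF Hf. apply (@is_RInt_unique R_CompleteNormedModule).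
  apply (@is_RInt_derive R_CompleteNormedModule F f); intros; [apply HF | apply Hf].
Qed.

Lemma exp_le x y : x <= y -> exp x <= exp y.
Proof. intros [H|H]; [left; apply exp_increasing | right; subst]; auto. Qed.

(** * The Gaussian integral *)

Definition gauss (t : R) := exp (- (t * t)).
Definition gauss_int (x : R) := RInt gauss 0 x.

(* The classical auxiliary function: [gauss_int x ^ 2 + atan_int x] is constant,
   equal to [atan 1 = PI / 4], while [atan_int x] vanishes as [x -> +oo]. *)
Definition atan_kernel (x t : R) := exp (- (x * x) * (1 + t * t)) / (1 + t * t).
Definition atan_int (x : R) := RInt (atan_kernel x) 0 1.

Lemma gauss_cont x : continuous gauss x.
Proof. apply continuous_of_ex_derive; unfold gauss; auto_derive; auto. Qed.

Lemma gauss_int_derive x : is_derive gauss_int x (gauss x).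
Proof.
  apply (@is_derive_RInt R_CompleteNormedModule gauss gauss_int 0 x).
  - apply filter_forall; intros b.
    apply (@RInt_correct R_CompleteNormedModule), ex_RInt_cont, gauss_cont.
  - apply gauss_cont.
Qed.

Lemma gauss_int_diff a b : RInt gauss a b = gauss_int b - gauss_int a.
Proof. unfold gauss_int; generalize (RInt_Chasles_R gauss 0 a b gauss_cont); lra. Qed.

Lemma gauss_int_nonneg x : 0 <= x -> 0 <= gauss_int x.
Proof.
  intros. apply RInt_ge_0; auto; [apply ex_RInt_cont, gauss_cont|].
  intros; apply Rlt_le, exp_pos.
Qed.

Lemma gauss_int_opp x : gauss_int (- x) = - gauss_int x.
Proof.
  unfold gauss_int.
  assert (E := RInt_comp_lin_R gauss (-1) 0 0 x (ex_RInt_cont _ _ _ gauss_cont)).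
  replace (-1 * 0 + 0) with 0 in E by ring; replace (-1 * x + 0) with (- x) in E by ring.
  rewrite <- E, (RInt_ext_R _ (fun y => -1 * gauss y)).
  - rewrite RInt_scal_R by apply ex_RInt_cont, gauss_cont; lra.
  - intros y _; unfold gauss; do 2 f_equal; ring.
Qed.

Lemma one_plus_sq_pos t : 0 < 1 + t * t.
Proof. nra. Qed.

Lemma atan_kernel_derive x t :
  is_derive (fun y => atan_kernel y t) x (-2 * x * exp (- (x * x) * (1 + t * t))).
Proof.
  generalize (one_plus_sq_pos t); intro. unfold atan_kernel.
  auto_derive; [lra | field; lra].
Qed.

Lemma ex_RInt_atan_kernel x a b : ex_RInt (atan_kernel x) a b.
Proof.
  apply ex_RInt_cont; intros t. generalize (one_plus_sq_pos t); intro.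
  apply continuous_of_ex_derive; unfold atan_kernel; auto_derive; lra.
Qed.

Lemma atan_int_derive x : is_derive atan_int x (-2 * gauss x * gauss_int x).
Proof.
  set (k := fun u v => -2 * u * exp (- (u * u) * (1 + v * v))).
  assert (Hparam : is_derive atan_int x (RInt (k x) 0 1)).
  { rewrite (RInt_ext_R _ (fun t => Derive (fun u => atan_kernel u t) x))
      by (intros; symmetry; apply is_derive_unique, atan_kernel_derive).
    apply (is_derive_RInt_param atan_kernel 0 1 x).
    - apply filter_forall; intros y t _; eexists; apply atan_kernel_derive.
    - intros t _. apply continuity_2d_pt_ext with (f := k).
      { intros; symmetry; apply is_derive_unique, atan_kernel_derive. }
      unfold k. repeat first
        [ apply continuity_2d_pt_mult | apply continuity_2d_pt_plus
        | apply continuity_2d_pt_opp | apply continuity_2d_pt_const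
        | apply continuity_2d_pt_id1 | apply continuity_2d_pt_id2
        | apply continuity_1d_2d_pt_comp with (f := exp);
          [apply derivable_continuous_pt, derivable_pt_exp|] ].
    - apply filter_forall; intros; apply ex_RInt_atan_kernel. }
  replace (-2 * gauss x * gauss_int x) with (RInt (k x) 0 1); [exact Hparam|].
  (* substitute [y = x t] *)
  rewrite (RInt_ext_R _ (fun t => (-2 * gauss x) * (x * gauss (x * t + 0)))).
  - rewrite RInt_scal_R, RInt_comp_lin_R by
      (apply ex_RInt_cont; intros; apply continuous_of_ex_derive; unfold gauss; auto_derive; auto).
    unfold gauss_int; rewrite Rmult_0_r, Rmult_1_r, !Rplus_0_r; reflexivity.
  - intros t _; unfold k, gauss.
    replace (- (x * x) * (1 + t * t)) with (- (x * x) + - ((x * t + 0) * (x * t + 0))) by ring.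
    rewrite exp_plus; ring.
Qed.

Lemma atan_int_0 : atan_int 0 = PI / 4.
Proof.
  unfold atan_int. replace (PI / 4) with (atan 1 - atan 0) by (rewrite atan_1, atan_0; ring).
  rewrite (RInt_ext_R _ (fun t => / (1 + t ^ 2))).
  - apply RInt_derive_R.
    + intros; apply is_derive_Reals, derivable_pt_lim_atan.
    + intros; apply continuous_of_ex_derive; auto_derive; nra.
  - intros t _; unfold atan_kernel.
    replace (- (0 * 0) * (1 + t * t)) with 0 by ring; rewrite exp_0; simpl; field.
    generalize (one_plus_sq_pos t); lra.
Qed.

Lemma gauss_int_sq x : gauss_int x * gauss_int x = PI / 4 - atan_int x.
Proof.
  set (H := fun y => atan_int y + gauss_int y * gauss_int y).
  assert (HD : forall y, is_derive H y 0).
  { intros y; unfold H.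
    replace 0 with (-2 * gauss y * gauss_int y + (gauss y * gauss_int y + gauss_int y * gauss y)) by ring.
    apply (@is_derive_plus R_AbsRing R_NormedModule); [apply atan_int_derive|].
    apply (@is_derive_mult R_AbsRing); try apply gauss_int_derive; intros; apply Rmult_comm. }
  assert (Hc : H x = H 0).
  { generalize (RInt_derive_R _ H 0 x HD (fun _ => continuous_const 0 _)).
    rewrite RInt_const; unfold scal; simpl; unfold mult; simpl; lra. }
  unfold H, gauss_int in Hc; rewrite RInt_point in Hc; fold (gauss_int x) in Hc.
  rewrite atan_int_0 in Hc; unfold zero in Hc; simpl in Hc; lra.
Qed.

Lemma atan_int_bounds x : 0 <= atan_int x <= exp (- (x * x)).
Proof.
  unfold atan_int; split.
  - apply RInt_ge_0; [lra | apply ex_RInt_atan_kernel |].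
    intros t _; apply Rlt_le, Rdiv_lt_0_compat; [apply exp_pos | apply one_plus_sq_pos].
  - apply Rle_trans with (RInt (fun _ => exp (- (x * x))) 0 1).
    + apply RInt_le; [lra | apply ex_RInt_atan_kernel | apply ex_RInt_cont; intros; apply continuous_const |].
      intros t _. unfold atan_kernel. generalize (one_plus_sq_pos t); intro.
      apply Rle_trans with (exp (- (x * x) * (1 + t * t))).
      * unfold Rdiv. rewrite <- (Rmult_1_r (exp _)) at 2.
        apply Rmult_le_compat_l; [apply Rlt_le, exp_pos|].
        rewrite <- Rinv_1; apply Rinv_le_contravar; nra.
      * apply exp_le. assert (0 <= x * x * (t * t)) by (apply Rmult_le_pos; nra). nra.
    + rewrite RInt_const; unfold scal; simpl; unfold mult; simpl; lra.
Qed.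

Definition half_sqrt_pi := sqrt PI / 2.

Lemma half_sqrt_pi_pos : 0 < half_sqrt_pi.
Proof. unfold half_sqrt_pi; generalize PI_RGT_0; intro; apply Rdiv_lt_0_compat; [apply sqrt_lt_R0|]; lra. Qed.

Lemma half_sqrt_pi_sq : half_sqrt_pi * half_sqrt_pi = PI / 4.
Proof.
  unfold half_sqrt_pi; generalize PI_RGT_0; intro.
  replace (sqrt PI / 2 * (sqrt PI / 2)) with (sqrt PI * sqrt PI / 4) by field.
  rewrite sqrt_sqrt; lra.
Qed.

Lemma gauss_int_limit x : 0 < x ->
  Rabs (gauss_int x - half_sqrt_pi) <= / (x * half_sqrt_pi).
Proof.
  intros Hx.
  generalize (gauss_int_sq x) (atan_int_bounds x) half_sqrt_pi_sq half_sqrt_pi_pos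
    (gauss_int_nonneg x (Rlt_le _ _ Hx)).
  intros E1 [U1 U2] E2 Sp Pn.
  assert (Ex : exp (- (x * x)) <= / x).
  { rewrite exp_Ropp; apply Rinv_le_contravar; auto. generalize (exp_ineq1_le (x * x)); nra. }
  assert (Hv : gauss_int x - half_sqrt_pi = - atan_int x / (gauss_int x + half_sqrt_pi))
    by (field_simplify_eq; nra).
  rewrite Hv; unfold Rdiv.
  rewrite Rabs_mult, Rabs_Ropp, Rabs_right, Rabs_right, Rinv_mult by
    (try apply Rle_ge, Rlt_le, Rinv_0_lt_compat; lra).
  apply Rmult_le_compat; try lra; [apply Rlt_le, Rinv_0_lt_compat; lra|].
  apply Rinv_le_contravar; lra.
Qed.

(** * Improper integrals over the real line *)

Lemma improper_intI (g : R -> R) I : (forall a b, ex_RInt g a b) ->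
  (forall eps, 0 < eps -> exists M, forall a b, a <= - M -> M <= b ->
     Rabs (RInt g a b - I) < eps) ->
  improper_int g I.
Proof.
  intros Hex H eps Heps. destruct (H eps Heps) as [M HM]. exists M; intros a b Ha Hb.
  exists (ex_RInt_Reals_0 _ _ _ (Hex a b)). rewrite <- RInt_Reals. auto.
Qed.

Lemma improper_intE (g : R -> R) I : improper_int g I ->
  forall eps, 0 < eps -> exists M, forall a b, a <= - M -> M <= b ->
    ex_RInt g a b /\ Rabs (RInt g a b - I) < eps.
Proof.
  intros H eps Heps. destruct (H eps Heps) as [M HM]. exists M; intros a b Ha Hb.
  destruct (HM a b Ha Hb) as [pr Hpr]. split; [apply ex_RInt_Reals_1; auto|].
  rewrite (RInt_Reals _ _ _ pr); auto.
Qed.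

Lemma improper_int_plus f g I J : improper_int f I -> improper_int g J ->
  improper_int (fun t => f t + g t) (I + J).
Proof.
  intros Hf Hg eps Heps.
  destruct (improper_intE _ _ Hf (eps / 2)) as [M1 H1]; [lra|].
  destruct (improper_intE _ _ Hg (eps / 2)) as [M2 H2]; [lra|].
  exists (Rmax M1 M2); intros a b Ha Hb.
  generalize (Rmax_l M1 M2) (Rmax_r M1 M2); intros.
  destruct (H1 a b) as [E1 B1]; try lra. destruct (H2 a b) as [E2 B2]; try lra.
  assert (E : ex_RInt (fun t => f t + g t) a b) by (apply (@ex_RInt_plus R_NormedModule); auto).
  exists (ex_RInt_Reals_0 _ _ _ E). rewrite <- RInt_Reals, RInt_plus_R by auto.
  replace (RInt f a b + RInt g a b - (I + J)) with ((RInt f a b - I) + (RInt g a b - J)) by ring.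
  eapply Rle_lt_trans; [apply Rabs_triang | lra].
Qed.

Lemma improper_int_scal f I c : improper_int f I -> improper_int (fun t => c * f t) (c * I).
Proof.
  intros Hf eps Heps. assert (Hc := Rabs_pos c).
  destruct (improper_intE _ _ Hf (eps / (Rabs c + 1))) as [M HM];
    [apply Rdiv_lt_0_compat; lra|].
  exists M; intros a b Ha Hb. destruct (HM a b Ha Hb) as [E B].
  assert (E' : ex_RInt (fun t => c * f t) a b) by (apply (@ex_RInt_scal R_NormedModule); auto).
  exists (ex_RInt_Reals_0 _ _ _ E'). rewrite <- RInt_Reals, RInt_scal_R by auto.
  rewrite <- Rmult_minus_distr_l, Rabs_mult.
  apply Rle_lt_trans with ((Rabs c + 1) * Rabs (RInt f a b - I));
    [apply Rmult_le_compat_r; [apply Rabs_pos | lra]|].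
  apply (Rmult_lt_compat_l (Rabs c + 1)) in B; [|lra].
  replace ((Rabs c + 1) * (eps / (Rabs c + 1))) with eps in B by (field; lra). exact B.
Qed.

Lemma improper_int_le f g I J : (forall t, f t <= g t) ->
  improper_int f I -> improper_int g J -> I <= J.
Proof.
  intros Hfg Hf Hg. apply Rnot_lt_le; intro Hlt.
  destruct (improper_intE _ _ Hf ((I - J) / 2)) as [M1 H1]; [lra|].
  destruct (improper_intE _ _ Hg ((I - J) / 2)) as [M2 H2]; [lra|].
  set (M := Rmax 0 (Rmax M1 M2)).
  assert (0 <= M /\ M1 <= M /\ M2 <= M) as (? & ? & ?).
  { unfold M; generalize (Rmax_l 0 (Rmax M1 M2)) (Rmax_r 0 (Rmax M1 M2)) (Rmax_l M1 M2) (Rmax_r M1 M2); lra. }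
  destruct (H1 (- M) M) as [E1 B1]; try lra. destruct (H2 (- M) M) as [E2 B2]; try lra.
  assert (RInt f (- M) M <= RInt g (- M) M) by (apply RInt_le; auto; lra).
  apply Rabs_def2 in B1; apply Rabs_def2 in B2. lra.
Qed.

Lemma improper_int_shift f I c : improper_int f I -> improper_int (fun t => f (t + c)) I.
Proof.
  intros Hf eps Heps. destruct (improper_intE _ _ Hf eps Heps) as [M H].
  exists (M + Rabs c); intros a b Ha Hb.
  generalize (Rabs_pos c) (Rle_abs c) (Rle_abs (- c)); rewrite Rabs_Ropp; intros.
  destruct (H (a + c) (b + c)) as [E B]; try lra.
  assert (Eq : forall t, f (t + c) = 1 * f (1 * t + c)) by (intros; rewrite !Rmult_1_l; reflexivity).
  assert (E' : ex_RInt (fun t => f (t + c)) a b).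
  { apply (ex_RInt_ext (fun t => 1 * f (1 * t + c))); [intros; symmetry; apply Eq|].
    apply (@ex_RInt_comp_lin R_CompleteNormedModule f 1 c a b); rewrite !Rmult_1_l; auto. }
  exists (ex_RInt_Reals_0 _ _ _ E'). rewrite <- RInt_Reals.
  rewrite (RInt_ext_R _ (fun t => 1 * f (1 * t + c))), RInt_comp_lin_R; rewrite ?Rmult_1_l; auto.
Qed.

Definition exp_abs (t : R) := exp (- Rabs t).

Lemma exp_abs_cont t : continuous exp_abs t.
Proof.
  apply (continuous_comp Rabs (fun y => exp (- y))); [apply continuous_Rabs|].
  apply continuous_of_ex_derive; auto_derive; auto.
Qed.

Lemma RInt_exp_abs_pos x y : 0 <= x <= y -> RInt exp_abs x y = exp (- x) - exp (- y).
Proof.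
  intros Hxy. rewrite (RInt_ext_R _ (fun t => exp (- t))).
  - rewrite (RInt_derive_R _ (fun t => - exp (- t))); [lra | |].
    + intros t; auto_derive; auto; ring.
    + intros t; apply continuous_of_ex_derive; auto_derive; auto.
  - intros t Ht. rewrite Rmin_left, Rmax_right in Ht by lra.
    unfold exp_abs; rewrite Rabs_right by lra; auto.
Qed.

Lemma RInt_exp_abs_neg x y : 0 <= x <= y -> RInt exp_abs (- y) (- x) = exp (- x) - exp (- y).
Proof.
  intros Hxy. rewrite (RInt_ext_R _ exp).
  - rewrite (RInt_derive_R _ exp); [reflexivity | |].
    + intros t; auto_derive; auto; ring.
    + intros t; apply continuous_of_ex_derive; auto_derive; auto.
  - intros t Ht. rewrite Rmin_left, Rmax_right in Ht by lra.
    unfold exp_abs; rewrite Rabs_left, Ropp_involutive by lra; auto.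
Qed.

Lemma RInt_abs_le_exp_abs (g : R -> R) C a b : a <= b -> (forall t, continuous g t) ->
  (forall t, Rabs (g t) <= C * exp_abs t) -> Rabs (RInt g a b) <= C * RInt exp_abs a b.
Proof.
  intros Hab Hc Hb. eapply Rle_trans; [apply abs_RInt_le; auto; apply ex_RInt_cont; auto|].
  rewrite <- RInt_scal_R by (apply ex_RInt_cont, exp_abs_cont).
  apply RInt_le; auto; [apply ex_RInt_norm, ex_RInt_cont; auto|].
  apply ex_RInt_cont; intros t. apply (continuous_comp exp_abs (fun y => C * y));
    [apply exp_abs_cont | apply continuous_of_ex_derive; auto_derive; auto].
Qed.

Lemma exp_neg_le_inv x : 0 <= x -> exp (- x) <= / (1 + x).
Proof. intros; rewrite exp_Ropp; apply Rinv_le_contravar; [lra | apply exp_ineq1_le]. Qed.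

Lemma exp_tail_lt K eps x : 0 <= K -> 0 < eps -> K / eps <= x -> K * exp (- x) < eps.
Proof.
  intros HK Heps Hx. assert (0 <= x) by (assert (0 <= K / eps) by (apply Rdiv_le_0_compat; lra); lra).
  apply Rle_lt_trans with (K / (1 + x)).
  - apply Rmult_le_compat_l; auto; apply exp_neg_le_inv; lra.
  - apply Rmult_le_compat_r with (r := eps) in Hx; [|lra].
    replace (K / eps * eps) with K in Hx by (field; lra).
    apply (Rmult_lt_reg_r (1 + x)); [lra|].
    unfold Rdiv; rewrite Rmult_assoc, Rinv_l by lra. nra.
Qed.

(* The limit is taken along the integers, by completeness of [R]. *)
Lemma limit_exp_rate (P : R -> R) K : 0 <= K ->
  (forall x y, 0 <= x <= y -> Rabs (P y - P x) <= K * exp (- x)) ->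
  exists L, forall x, 0 <= x -> Rabs (P x - L) <= K * exp (- x).
Proof.
  intros HK HP.
  assert (Cc : Cauchy_crit (fun n => P (INR n))).
  { intros eps Heps. destruct (INR_unbounded (K / eps)) as [N HN].
    exists N; intros n m Hn Hm; unfold Rdist.
    assert (INR N <= INR n /\ INR N <= INR m) as [] by (split; apply le_INR; lia).
    assert (0 <= INR N) by apply pos_INR.
    destruct (Rle_dec (INR n) (INR m)).
    - rewrite <- Rabs_Ropp, Ropp_minus_distr.
      eapply Rle_lt_trans; [apply HP; lra | apply exp_tail_lt; lra].
    - eapply Rle_lt_trans; [apply HP; lra | apply exp_tail_lt; lra]. }
  destruct (R_complete _ Cc) as [L HL]. exists L; intros x Hx.
  apply Rnot_lt_le; intro Hlt. set (e := Rabs (P x - L) - K * exp (- x)).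
  destruct (HL e) as [N HN]; [unfold e; lra|].
  destruct (INR_unbounded x) as [N2 HN2].
  set (n := max N N2). assert (H1 := HN n ltac:(lia)); unfold Rdist in H1.
  assert (INR N2 <= INR n) by (apply le_INR; lia).
  assert (H3 := HP x (INR n) ltac:(lra)).
  assert (Rabs (P x - L) <= Rabs (P (INR n) - P x) + Rabs (P (INR n) - L)).
  { replace (P x - L) with (- (P (INR n) - P x) + (P (INR n) - L)) by ring.
    eapply Rle_trans; [apply Rabs_triang | rewrite Rabs_Ropp; lra]. }
  unfold e in *; lra.
Qed.

Lemma improper_int_dominated (g : R -> R) C : (forall t, continuous g t) ->
  (forall t, Rabs (g t) <= C * exp_abs t) -> exists I, improper_int g I /\ Rabs I <= 2 * C.
Proof.
  intros Hc Hdom.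
  assert (HC : 0 <= C).
  { generalize (Hdom 0) (Rabs_pos (g 0)) (exp_pos (- Rabs 0)); unfold exp_abs; nra. }
  assert (Dpos : forall x, 0 <= exp (- x)) by (intros; apply Rlt_le, exp_pos).
  assert (HP : forall x y, 0 <= x <= y -> Rabs (RInt g 0 y - RInt g 0 x) <= C * exp (- x)).
  { intros x y Hxy. rewrite <- (RInt_Chasles_R g 0 x y), Rplus_minus_l by auto.
    eapply Rle_trans; [apply RInt_abs_le_exp_abs; auto; lra|].
    rewrite RInt_exp_abs_pos by auto. generalize (Dpos y); nra. }
  assert (HQ : forall x y, 0 <= x <= y -> Rabs (RInt g (- y) 0 - RInt g (- x) 0) <= C * exp (- x)).
  { intros x y Hxy. rewrite <- (RInt_Chasles_R g (- y) (- x) 0), Rplus_minus_r by auto.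
    eapply Rle_trans; [apply RInt_abs_le_exp_abs; auto; lra|].
    rewrite RInt_exp_abs_neg by auto. generalize (Dpos y); nra. }
  destruct (limit_exp_rate _ _ HC HP) as [L1 H1].
  destruct (limit_exp_rate _ _ HC HQ) as [L2 H2].
  exists (L1 + L2); split.
  - apply improper_intI; [intros; apply ex_RInt_cont; auto|].
    intros eps Heps. exists (2 * C / eps); intros a b Ha Hb.
    assert (0 <= 2 * C / eps) by (apply Rdiv_le_0_compat; lra).
    assert (Hx : forall x, 2 * C / eps <= x -> C * exp (- x) < eps / 2).
    { intros x Hx; apply exp_tail_lt; auto; [lra|].
      replace (C / (eps / 2)) with (2 * C / eps) by (field; lra); auto. }
    rewrite <- (RInt_Chasles_R g a 0 b) by auto.
    assert (A1 := H1 b ltac:(lra)). assert (A2 := H2 (- a) ltac:(lra)).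
    assert (B1 := Hx b Hb). assert (B2 := Hx (- a) ltac:(lra)).
    rewrite Ropp_involutive in A2, B2.
    replace (RInt g a 0 + RInt g 0 b - (L1 + L2)) with ((RInt g 0 b - L1) + (RInt g a 0 - L2)) by ring.
    eapply Rle_lt_trans; [apply Rabs_triang | lra].
  - assert (A1 := H1 0 ltac:(lra)). assert (A2 := H2 0 ltac:(lra)).
    rewrite Ropp_0, RInt_point in A1, A2.
    change (Rabs (0 - L1) <= C * exp 0) in A1. change (Rabs (0 - L2) <= C * exp 0) in A2.
    rewrite exp_0, Rmult_1_r, Rminus_0_l, Rabs_Ropp in A1, A2.
    eapply Rle_trans; [apply Rabs_triang | lra].
Qed.

(** * The standard normal density *)

Definition normal_pdf (t : R) := exp (- t ^ 2 / 2) / sqrt (2 * PI).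

Lemma sqrt_2PI_ge_1 : 1 <= sqrt (2 * PI).
Proof. rewrite <- sqrt_1; apply sqrt_le_1_alt; generalize PI2_1; lra. Qed.

Lemma normal_pdf_pos t : 0 < normal_pdf t.
Proof. generalize sqrt_2PI_ge_1; intro; apply Rdiv_lt_0_compat; [apply exp_pos | lra]. Qed.

Lemma normal_pdf_cont t : continuous normal_pdf t.
Proof.
  generalize sqrt_2PI_ge_1; intro.
  apply continuous_of_ex_derive; unfold normal_pdf; auto_derive; lra.
Qed.

Lemma normal_pdf_tilt u c : normal_pdf u * exp (c * u) = exp (c ^ 2 / 2) * normal_pdf (u - c).
Proof.
  generalize sqrt_2PI_ge_1; intro. unfold normal_pdf, Rdiv.
  rewrite Rmult_comm, <- Rmult_assoc, <- exp_plus, <- Rmult_assoc, <- exp_plus.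
  replace (c * u + - u ^ 2 * / 2) with (c ^ 2 * / 2 + - (u - c) ^ 2 * / 2) by field. ring.
Qed.

Lemma RInt_normal_pdf a b :
  RInt normal_pdf a b = (gauss_int (/ sqrt 2 * b) - gauss_int (/ sqrt 2 * a)) / sqrt PI.
Proof.
  assert (P := PI_RGT_0). assert (S2 : 0 < sqrt 2) by (apply sqrt_lt_R0; lra).
  assert (SP : 0 < sqrt PI) by (apply sqrt_lt_R0; lra).
  rewrite (RInt_ext_R _ (fun y => / sqrt PI * (/ sqrt 2 * gauss (/ sqrt 2 * y + 0)))).
  - rewrite RInt_scal_R, RInt_comp_lin_R, gauss_int_diff, !Rplus_0_r; [unfold Rdiv; apply Rmult_comm | |].
    + apply ex_RInt_cont, gauss_cont.
    + apply ex_RInt_cont; intros; apply continuous_of_ex_derive; unfold gauss; auto_derive; auto.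
  - intros y _. unfold normal_pdf, gauss. rewrite Rplus_0_r, sqrt_mult by lra.
    replace (- (/ sqrt 2 * y * (/ sqrt 2 * y))) with (- y ^ 2 / (sqrt 2 * sqrt 2)) by (field; lra).
    rewrite sqrt_sqrt by lra. field; lra.
Qed.

Lemma improper_int_normal_pdf : improper_int normal_pdf 1.
Proof.
  assert (P := PI_RGT_0). assert (S2 : 0 < sqrt 2) by (apply sqrt_lt_R0; lra).
  assert (SP : 0 < sqrt PI) by (apply sqrt_lt_R0; lra).
  assert (Sp := half_sqrt_pi_pos).
  assert (spE : half_sqrt_pi * 2 = sqrt PI) by (unfold half_sqrt_pi; field).
  apply improper_intI; [intros; apply ex_RInt_cont, normal_pdf_cont|].
  intros eps Heps. set (u := / sqrt 2). assert (Hu : 0 < u) by (apply Rinv_0_lt_compat; lra).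
  (* both tails are at most [c / (2 x)] at distance [x] *)
  set (c := 2 / (u * half_sqrt_pi * sqrt PI)).
  assert (Hc : 0 < c) by (unfold c; apply Rdiv_lt_0_compat; [lra | repeat apply Rmult_lt_0_compat; lra]).
  assert (Hce : 0 < c / eps) by (apply Rdiv_lt_0_compat; lra).
  assert (Ktail : forall x, c / eps + 1 <= x ->
    / (u * x * half_sqrt_pi) * / sqrt PI < eps / 2).
  { intros x Hx. assert (0 < x) by lra.
    replace (/ (u * x * half_sqrt_pi) * / sqrt PI) with (c / 2 / x) by (unfold c; field; lra).
    apply Rmult_le_compat_r with (r := eps) in Hx; [|lra].
    replace ((c / eps + 1) * eps) with (c + eps) in Hx by (field; lra).
    apply (Rmult_lt_reg_r x); [lra|]. replace (c / 2 / x * x) with (c / 2) by (field; lra). nra. }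
  exists (c / eps + 1); intros a b Ha Hb.
  rewrite RInt_normal_pdf; fold u.
  replace (u * a) with (- (u * - a)) by ring. rewrite gauss_int_opp.
  assert (B1 := gauss_int_limit (u * b) ltac:(apply Rmult_lt_0_compat; lra)).
  assert (B2 := gauss_int_limit (u * - a) ltac:(apply Rmult_lt_0_compat; lra)).
  replace ((gauss_int (u * b) - - gauss_int (u * - a)) / sqrt PI - 1) with
    (((gauss_int (u * b) - half_sqrt_pi) + (gauss_int (u * - a) - half_sqrt_pi)) / sqrt PI)
    by (field_simplify_eq; lra).
  unfold Rdiv. rewrite Rabs_mult, (Rabs_right (/ sqrt PI)) by (apply Rle_ge, Rlt_le, Rinv_0_lt_compat; lra).
  apply Rle_lt_trans with ((/ (u * b * half_sqrt_pi) + / (u * - a * half_sqrt_pi)) * / sqrt PI).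
  - apply Rmult_le_compat_r; [apply Rlt_le, Rinv_0_lt_compat; lra|].
    eapply Rle_trans; [apply Rabs_triang | lra].
  - rewrite Rmult_plus_distr_r. generalize (Ktail b Hb) (Ktail (- a) ltac:(lra)); lra.
Qed.

Lemma normal_pdf_le t : normal_pdf t <= exp (- t ^ 2 / 2).
Proof.
  generalize sqrt_2PI_ge_1 (exp_pos (- t ^ 2 / 2)); intros. unfold normal_pdf, Rdiv.
  rewrite <- (Rmult_1_r (exp _)) at 2. apply Rmult_le_compat_l; [lra|].
  rewrite <- Rinv_1; apply Rinv_le_contravar; lra.
Qed.

Lemma normal_pdf_exp_le a t : normal_pdf t * exp (a * Rabs t) <= exp ((a + 1) ^ 2 / 2) * exp_abs t.
Proof.
  eapply Rle_trans; [apply Rmult_le_compat_r; [apply Rlt_le, exp_pos | apply normal_pdf_le]|].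
  unfold exp_abs; rewrite <- !exp_plus; apply exp_le.
  rewrite <- (pow2_abs t). generalize (pow2_ge_0 (a + 1 - Rabs t)); nra.
Qed.

Lemma normal_pdf_le_exp_abs t : normal_pdf t <= 2 * exp_abs t.
Proof.
  generalize (normal_pdf_exp_le 0 t). rewrite Rmult_0_l, exp_0, Rmult_1_r. intros H.
  eapply Rle_trans; [apply H | apply Rmult_le_compat_r; [apply Rlt_le, exp_pos|]].
  replace ((0 + 1) ^ 2 / 2) with (/ 2) by field.
  assert (exp (/ 2) * exp (/ 2) <= 4).
  { rewrite <- exp_plus. replace (/ 2 + / 2) with 1 by field. generalize exp_le_3; lra. }
  generalize (exp_pos (/ 2)); nra.
Qed.

Lemma improper_int_mul_normal_pdf : improper_int (fun t => t * normal_pdf t) 0.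
Proof.
  assert (Hc : forall t, continuous (fun t => t * normal_pdf t) t)
    by (intros; apply (continuous_mult (fun t => t) normal_pdf); [apply continuous_id | apply normal_pdf_cont]).
  apply improper_intI; [intros; apply ex_RInt_cont; auto|].
  intros eps Heps. exists (4 / eps); intros a b Ha Hb.
  assert (0 < 4 / eps) by (apply Rdiv_lt_0_compat; lra).
  rewrite (RInt_derive_R _ (fun t => - normal_pdf t)); [| |exact Hc].
  2:{ intros t. generalize sqrt_2PI_ge_1; intro. unfold normal_pdf. auto_derive; [lra|].
      replace (- (t * (t * 1)) * / 2) with (- t ^ 2 / 2) by field. field; lra. }
  assert (K : forall x, 4 / eps <= Rabs x -> normal_pdf x < eps / 2).
  { intros x Hx. eapply Rle_lt_trans; [apply normal_pdf_le_exp_abs|].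
    generalize (exp_neg_le_inv (Rabs x) (Rabs_pos x)); fold (exp_abs x); intro Hi.
    apply Rmult_le_compat_r with (r := eps) in Hx; [|lra].
    replace (4 / eps * eps) with 4 in Hx by (field; lra).
    apply Rle_lt_trans with (2 / (1 + Rabs x)); [unfold Rdiv; lra|].
    apply (Rmult_lt_reg_r (1 + Rabs x)); [generalize (Rabs_pos x); lra|].
    unfold Rdiv; rewrite Rmult_assoc, Rinv_l by (generalize (Rabs_pos x); lra). lra. }
  assert (K1 := K a ltac:(rewrite Rabs_left1 by lra; lra)).
  assert (K2 := K b ltac:(rewrite Rabs_right by lra; lra)).
  generalize (normal_pdf_pos a) (normal_pdf_pos b); intros.
  rewrite Rminus_0_r; apply Rabs_def1; lra.
Qed.

Lemma continuous_of_exp_lipschitz (h : R -> R) L K : 0 <= L -> 0 <= K ->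
  (forall t t', Rabs (h t - h t') <= L * exp (K * (Rabs t + Rabs t')) * Rabs (t - t')) ->
  forall t0, continuous h t0.
Proof.
  intros HL HK H t0. apply continuity_pt_filterlim.
  intros eps Heps. set (Q := L * exp (K * (2 * Rabs t0 + 1)) + 1).
  assert (HQ : 0 < Q) by (unfold Q; generalize (exp_pos (K * (2 * Rabs t0 + 1))); nra).
  exists (Rmin 1 (eps / Q)); split; [apply Rmin_pos; [lra | apply Rdiv_lt_0_compat; lra]|].
  intros t [_ Ht]; simpl in *; unfold Rdist in *.
  assert (Ht1 : Rabs (t - t0) < 1) by (eapply Rlt_le_trans; [apply Ht | apply Rmin_l]).
  assert (Ht2 : Rabs (t - t0) < eps / Q) by (eapply Rlt_le_trans; [apply Ht | apply Rmin_r]).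
  eapply Rle_lt_trans; [apply H|].
  assert (Rabs t <= Rabs t0 + 1).
  { replace t with (t0 + (t - t0)) by ring. eapply Rle_trans; [apply Rabs_triang | lra]. }
  assert (L * exp (K * (Rabs t + Rabs t0)) <= Q).
  { unfold Q.
    assert (exp (K * (Rabs t + Rabs t0)) <= exp (K * (2 * Rabs t0 + 1)))
      by (apply exp_le, Rmult_le_compat_l; lra).
    nra. }
  apply Rle_lt_trans with (Q * Rabs (t - t0)); [apply Rmult_le_compat_r; [apply Rabs_pos | lra]|].
  apply Rmult_lt_compat_l with (r := Q) in Ht2; [|lra].
  replace (Q * (eps / Q)) with eps in Ht2 by (field; lra). exact Ht2.
Qed.

Lemma rsum_S n f : rsum (S n) f = f O + rsum n (fun k => f (S k)).
Proof. induction n as [|n IH]; simpl in *; [ring | rewrite IH; ring]. Qed.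

Lemma rprod_S n f : rprod (S n) f = f O * rprod n (fun k => f (S k)).
Proof. induction n as [|n IH]; simpl in *; [ring | rewrite IH; ring]. Qed.

Lemma rsum_ext n f g : (forall k, (k < n)%nat -> f k = g k) -> rsum n f = rsum n g.
Proof. induction n; simpl; intros H; auto. rewrite IHn, H by (auto; lia); auto. Qed.

Lemma rsum_plus n f g : rsum n (fun k => f k + g k) = rsum n f + rsum n g.
Proof. induction n; simpl; [ring | rewrite IHn; ring]. Qed.

Lemma rsum_minus n f g : rsum n (fun k => f k - g k) = rsum n f - rsum n g.
Proof. induction n; simpl; [ring | rewrite IHn; ring]. Qed.

Lemma rsum_scal n c f : rsum n (fun k => c * f k) = c * rsum n f.
Proof. induction n; simpl; [ring | rewrite IHn; ring]. Qed.

Lemma rsum_const n c : rsum n (fun _ => c) = INR n * c.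
Proof. induction n; [simpl; ring | rewrite S_INR; simpl; rewrite IHn; ring]. Qed.

Lemma rsum_le n f g : (forall k, (k < n)%nat -> f k <= g k) -> rsum n f <= rsum n g.
Proof.
  induction n; simpl; intros H; [lra|].
  apply Rplus_le_compat; [apply IHn; intros; apply H | apply H]; lia.
Qed.

Lemma rsum_nonneg n f : (forall k, (k < n)%nat -> 0 <= f k) -> 0 <= rsum n f.
Proof. intros H. rewrite <- (Rmult_0_r (INR n)), <- rsum_const. apply rsum_le, H. Qed.

Lemma rsum_abs_le n f : Rabs (rsum n f) <= rsum n (fun k => Rabs (f k)).
Proof.
  induction n; simpl; [rewrite Rabs_R0; lra|].
  eapply Rle_trans; [apply Rabs_triang | lra].
Qed.

Lemma rsum_term_le n f k : (k < n)%nat -> (forall j, (j < n)%nat -> 0 <= f j) -> f k <= rsum n f.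
Proof.
  induction n; intros Hk Hf; [lia|]. simpl. destruct (Nat.eq_dec k n).
  - subst. assert (0 <= rsum n f) by (apply rsum_nonneg; intros; apply Hf; lia). lra.
  - assert (f k <= rsum n f) by (apply IHn; [lia | intros; apply Hf; lia]).
    assert (0 <= f n) by (apply Hf; lia). lra.
Qed.

Definition l1norm n (z : nat -> R) := rsum n (fun i => Rabs (z i)).
Definition l1dist n (z z' : nat -> R) := rsum n (fun i => Rabs (z i - z' i)).

Lemma l1norm_nonneg n z : 0 <= l1norm n z.
Proof. apply rsum_nonneg; intros; apply Rabs_pos. Qed.

Lemma l1dist_nonneg n z z' : 0 <= l1dist n z z'.
Proof. apply rsum_nonneg; intros; apply Rabs_pos. Qed.

Lemma l1norm_vcons n t z : l1norm (S n) (vcons t z) = Rabs t + l1norm n z.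
Proof. apply rsum_S. Qed.

Lemma l1dist_vcons n t z t' z' :
  l1dist (S n) (vcons t z) (vcons t' z') = Rabs (t - t') + l1dist n z z'.
Proof. apply rsum_S. Qed.

Lemma l1dist_refl n z : l1dist n z z = 0.
Proof.
  unfold l1dist; rewrite (rsum_ext _ _ (fun _ => 0)), rsum_const; [ring|].
  intros; rewrite Rminus_diag, Rabs_R0; auto.
Qed.

Lemma l1norm_lipschitz n z z' : Rabs (l1norm n z - l1norm n z') <= l1dist n z z'.
Proof.
  unfold l1norm, l1dist; rewrite <- rsum_minus.
  eapply Rle_trans; [apply rsum_abs_le | apply rsum_le; intros; apply Rabs_triang_inv2].
Qed.

Lemma std_gauss_density_vcons n t z :
  std_gauss_density (S n) (vcons t z) = normal_pdf t * std_gauss_density n z.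
Proof. apply rprod_S. Qed.

Lemma std_gauss_density_pos n z : 0 < std_gauss_density n z.
Proof.
  unfold std_gauss_density; induction n; simpl; [lra|].
  apply Rmult_lt_0_compat; [auto | apply (normal_pdf_pos (z n))].
Qed.

(** * Iterated integrals *)

Lemma iter_int_ext n F G I : (forall z, F z = G z) -> iter_int n F I -> iter_int n G I.
Proof. intros E H. replace G with F; auto. apply functional_extensionality; auto. Qed.

Lemma iter_int_plus n : forall F G I J, iter_int n F I -> iter_int n G J ->
  iter_int n (fun z => F z + G z) (I + J).
Proof.
  induction n as [|m IH]; simpl; intros F G I J HF HG; [subst; auto|].
  destruct HF as [g [Hg Ig]], HG as [h [Hh Ih]].
  exists (fun t => g t + h t); split; [|apply improper_int_plus; auto].
  intros t; apply (IH (fun z => F (vcons t z)) (fun z => G (vcons t z))); auto.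
Qed.

Lemma iter_int_scal n : forall F I c, iter_int n F I -> iter_int n (fun z => c * F z) (c * I).
Proof.
  induction n as [|m IH]; simpl; intros F I c HF; [subst; auto|].
  destruct HF as [g [Hg Ig]]. exists (fun t => c * g t); split; [|apply improper_int_scal; auto].
  intros t; apply (IH (fun z => F (vcons t z))); auto.
Qed.

Lemma iter_int_le n : forall F G I J, (forall z, F z <= G z) ->
  iter_int n F I -> iter_int n G J -> I <= J.
Proof.
  induction n as [|m IH]; simpl; intros F G I J Hle HF HG; [subst; auto|].
  destruct HF as [g [Hg Ig]], HG as [h [Hh Ih]].
  apply (improper_int_le g h); auto.
  intros t; apply (IH (fun z => F (vcons t z)) (fun z => G (vcons t z))); auto.
Qed.

Lemma iter_int_minus n F G I J : iter_int n F I -> iter_int n G J ->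
  iter_int n (fun z => F z - G z) (I - J).
Proof.
  intros HF HG. replace (I - J) with (I + -1 * J) by ring.
  eapply iter_int_ext; [|exact (iter_int_plus n _ _ _ _ HF (iter_int_scal n G J (-1) HG))].
  intros; simpl; ring.
Qed.

Lemma iter_int_const_density n : forall c, iter_int n (fun z => c * std_gauss_density n z) c.
Proof.
  induction n as [|m IH]; intros c; simpl; [unfold std_gauss_density; simpl; ring|].
  exists (fun t => c * normal_pdf t); split.
  - intros t. eapply iter_int_ext; [|apply (IH (c * normal_pdf t))].
    intros z; simpl; rewrite std_gauss_density_vcons; ring.
  - rewrite <- (Rmult_1_r c) at 1. apply improper_int_scal, improper_int_normal_pdf.
Qed.

Lemma iter_int_density_nonneg n F I : (forall z, 0 <= F z) ->
  iter_int n (fun z => F z * std_gauss_density n z) I -> 0 <= I.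
Proof.
  intros HF HI. eapply iter_int_le; [|exact (iter_int_const_density n 0) | exact HI].
  intros z; cbv beta; generalize (HF z) (std_gauss_density_pos n z); nra.
Qed.

Lemma iter_int_rsum n N : forall (F : nat -> (nat -> R) -> R) (I : nat -> R),
  (forall i, (i < N)%nat -> iter_int n (F i) (I i)) ->
  iter_int n (fun z => rsum N (fun i => F i z)) (rsum N I).
Proof.
  induction N; intros F I H; simpl.
  - eapply iter_int_ext; [|apply (iter_int_const_density n 0)]; intros; simpl; ring.
  - apply iter_int_plus; [apply IHN; intros | ]; apply H; lia.
Qed.

Lemma iter_int_linear n : forall a,
  iter_int n (fun z => rsum n (fun k => a k * z k) * std_gauss_density n z) 0.
Proof.
  induction n as [|m IH]; intros a; cbn [iter_int]; [unfold std_gauss_density; simpl; ring|].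
  exists (fun t => a O * (t * normal_pdf t)); split.
  - intros t. replace (a O * (t * normal_pdf t)) with (a O * t * normal_pdf t + normal_pdf t * 0) by ring.
    eapply iter_int_ext; [|exact (iter_int_plus m _ _ _ _ (iter_int_const_density m (a O * t * normal_pdf t))
                                    (iter_int_scal m _ _ (normal_pdf t) (IH (fun k => a (S k)))))].
    intros z; cbv beta. rewrite std_gauss_density_vcons, rsum_S; simpl; ring.
  - rewrite <- (Rmult_0_r (a O)). apply improper_int_scal, improper_int_mul_normal_pdf.
Qed.

(* Coordinates from [n] on are left unchanged; they do not matter to [iter_int n]. *)
Definition vshift n (z c : nat -> R) : nat -> R :=
  fun i => if (i <? n)%nat then z i + c i else z i.

Lemma vshift_0 z c : vshift 0 z c = z.
Proof. apply functional_extensionality; intros i; unfold vshift; destruct i; reflexivity. Qed.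

Lemma vshift_vcons n t z c :
  vshift (S n) (vcons t z) c = vcons (t + c O) (vshift n z (fun k => c (S k))).
Proof. apply functional_extensionality; intros i; unfold vshift; destruct i; reflexivity. Qed.

Theorem iter_int_cameron_martin n : forall f c I,
  iter_int n (fun z => f (vshift n z c) * std_gauss_density n z) I ->
  iter_int n (fun z => f z * exp (rsum n (fun k => c k * z k)) * std_gauss_density n z)
    (exp (rsum n (fun k => c k ^ 2) / 2) * I).
Proof.
  induction n as [|m IH]; intros f c I HF; cbn [iter_int] in *.
  - rewrite vshift_0 in HF; subst. unfold std_gauss_density; simpl.
    replace (0 / 2) with 0 by field; rewrite exp_0; ring.
  - destruct HF as [g [Hg Ig]]. set (c' := fun k => c (S k)).
    set (K := exp (c O ^ 2 / 2) * exp (rsum m (fun k => c' k ^ 2) / 2)).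
    exists (fun u => K * g (u + - c O)); split.
    + intros u. set (t := u + - c O). generalize (normal_pdf_pos t); intro.
      assert (A : iter_int m (fun z => f (vcons u (vshift m z c')) * std_gauss_density m z)
                    (/ normal_pdf t * g t)).
      { eapply iter_int_ext; [|apply (iter_int_scal m _ _ (/ normal_pdf t) (Hg t))].
        intros z; simpl. rewrite vshift_vcons, std_gauss_density_vcons.
        replace (t + c O) with u by (unfold t; ring). fold c'. field; lra. }
      assert (B := iter_int_scal m _ _ (normal_pdf u * exp (c O * u)) (IH (fun z => f (vcons u z)) c' _ A)).
      replace (K * g t) with (normal_pdf u * exp (c O * u) *
                              (exp (rsum m (fun k => c' k ^ 2) / 2) * (/ normal_pdf t * g t))).
      * eapply iter_int_ext; [|exact B]. intros z; cbv beta.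
        rewrite std_gauss_density_vcons, rsum_S; simpl; rewrite exp_plus; unfold c'; ring.
      * rewrite normal_pdf_tilt. replace (u - c O) with t by (unfold t; ring). unfold K; field; lra.
    + replace (exp (rsum (S m) (fun k => c k ^ 2) / 2) * I) with (K * I).
      * apply improper_int_scal, improper_int_shift, Ig.
      * unfold K; rewrite rsum_S, <- exp_plus; unfold c'; f_equal; f_equal; field.
Qed.

Lemma iter_int_exp_linear n a :
  iter_int n (fun z => exp (rsum n (fun k => a k * z k)) * std_gauss_density n z)
    (exp (rsum n (fun k => a k ^ 2) / 2)).
Proof.
  assert (K := iter_int_cameron_martin n (fun _ => 1) a 1 (iter_int_const_density n 1)).
  rewrite Rmult_1_r in K. eapply iter_int_ext; [|exact K]. intros; simpl; ring.
Qed.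

(** * Existence of the iterated integrals *)

(* At most exponential growth, and locally Lipschitz with an exponentially growing
   constant: a class stable under integrating out one coordinate against the normal
   density, the Lipschitz bound giving continuity of the partial integrals. *)
Definition exp_lipschitz n C K (f : (nat -> R) -> R) :=
  (forall z, Rabs (f z) <= C * exp (K * l1norm n z)) /\
  (forall z z', Rabs (f z - f z') <= C * exp (K * (l1norm n z + l1norm n z')) * l1dist n z z').

Lemma exp_diff_le a b : 0 <= a -> 0 <= b -> Rabs (exp a - exp b) <= exp (a + b) * Rabs (a - b).
Proof.
  assert (K : forall x y, 0 <= x <= y -> exp y - exp x <= exp (x + y) * (y - x)).
  { intros x y Hxy.
    assert (1 - (y - x) <= exp (x - y)) by (generalize (exp_ineq1_le (x - y)); lra).
    assert (exp y <= exp (x + y)) by (apply exp_le; lra).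
    assert (exp x = exp y * exp (x - y)) by (rewrite <- exp_plus; f_equal; ring).
    generalize (exp_pos y); nra. }
  intros Ha Hb. destruct (Rle_dec a b).
  - rewrite Rabs_minus_sym, (Rabs_minus_sym a), !Rabs_right; [apply K; lra | lra |].
    apply Rle_ge, Rge_le; generalize (exp_le a b r); lra.
  - rewrite !Rabs_right, Rplus_comm; [apply K; lra | lra |].
    generalize (exp_le b a ltac:(lra)); lra.
Qed.

Lemma exp_l1norm_exp_lipschitz n K : 0 <= K ->
  exp_lipschitz n (1 + 2 * K) (2 * K) (fun z => exp (2 * K * l1norm n z)).
Proof.
  intros HK; split.
  - intros z. rewrite Rabs_right by (apply Rle_ge, Rlt_le, exp_pos).
    generalize (exp_pos (2 * K * l1norm n z)); nra.
  - intros z z'. generalize (l1norm_nonneg n z) (l1norm_nonneg n z') (l1norm_lipschitz n z z'); intros.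
    eapply Rle_trans; [apply exp_diff_le; apply Rmult_le_pos; lra|].
    replace (2 * K * l1norm n z - 2 * K * l1norm n z') with (2 * K * (l1norm n z - l1norm n z')) by ring.
    rewrite <- Rmult_plus_distr_l, Rabs_mult, (Rabs_right (2 * K)) by lra.
    generalize (exp_pos (2 * K * (l1norm n z + l1norm n z'))) (Rabs_pos (l1norm n z - l1norm n z'))
      (l1dist_nonneg n z z'); intros.
    apply Rle_trans with (exp (2 * K * (l1norm n z + l1norm n z')) * ((1 + 2 * K) * l1dist n z z'));
      [apply Rmult_le_compat_l; nra | right; ring].
Qed.

Lemma exp_lipschitz_vcons n C K f t : 0 <= C -> 0 <= K -> exp_lipschitz (S n) C K f ->
  exp_lipschitz n (C * exp (2 * K * Rabs t)) K (fun z => f (vcons t z)).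
Proof.
  intros HC HK [Hb Hl]. generalize (Rabs_pos t); intro. split.
  - intros z. eapply Rle_trans; [apply Hb|]. rewrite l1norm_vcons, Rmult_assoc, <- exp_plus.
    apply Rmult_le_compat_l, exp_le; [auto | generalize (l1norm_nonneg n z); nra].
  - intros z z'. eapply Rle_trans; [apply Hl|].
    rewrite !l1norm_vcons, l1dist_vcons, Rminus_diag, Rabs_R0, Rplus_0_l.
    apply Rmult_le_compat_r; [apply l1dist_nonneg|].
    rewrite Rmult_assoc, <- exp_plus. apply Rmult_le_compat_l, exp_le; [auto | lra].
Qed.

Lemma partial_integral_lipschitz n C K f h IB : exp_lipschitz (S n) C K f ->
  (forall t, iter_int n (fun z => f (vcons t z) * std_gauss_density n z) (h t)) ->
  iter_int n (fun z => exp (2 * K * l1norm n z) * std_gauss_density n z) IB ->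
  forall t t', Rabs (h t - h t') <= C * IB * exp (K * (Rabs t + Rabs t')) * Rabs (t - t').
Proof.
  intros [_ Hl] Hh HIB.
  assert (Half : forall t t', h t - h t' <= C * IB * exp (K * (Rabs t + Rabs t')) * Rabs (t - t')).
  { intros t t'. set (c := C * exp (K * (Rabs t + Rabs t')) * Rabs (t - t')).
    replace (C * IB * exp (K * (Rabs t + Rabs t')) * Rabs (t - t')) with (c * IB) by (unfold c; ring).
    eapply iter_int_le; [|exact (iter_int_minus n _ _ _ _ (Hh t) (Hh t')) | exact (iter_int_scal n _ _ c HIB)].
    intros z; cbv beta. generalize (std_gauss_density_pos n z); intro.
    assert (L := Hl (vcons t z) (vcons t' z)).
    rewrite !l1norm_vcons, l1dist_vcons, l1dist_refl, Rplus_0_r in L.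
    rewrite <- Rmult_minus_distr_r, <- Rmult_assoc.
    apply Rmult_le_compat_r; [lra|]. eapply Rle_trans; [apply Rle_abs|].
    eapply Rle_trans; [exact L|]. right. unfold c.
    replace (K * (Rabs t + l1norm n z + (Rabs t' + l1norm n z)))
      with (K * (Rabs t + Rabs t') + 2 * K * l1norm n z) by ring.
    rewrite exp_plus; ring. }
  intros t t'. apply Rabs_le; split; [|apply Half].
  generalize (Half t' t); rewrite (Rplus_comm (Rabs t')), (Rabs_minus_sym t'); lra.
Qed.

Theorem ex_iter_int_exp_lipschitz n : forall K, 0 <= K -> exists M, 0 <= M /\
  forall C f, 0 <= C -> exp_lipschitz n C K f ->
    exists I, iter_int n (fun z => f z * std_gauss_density n z) I /\ Rabs I <= C * M.
Proof.
  induction n as [|m IH]; intros K HK.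
  - exists 1; split; [lra|]. intros C f HC [Hb _].
    exists (f (fun _ => 0) * std_gauss_density 0 (fun _ => 0)); split; [reflexivity|].
    unfold std_gauss_density; simpl. rewrite Rmult_1_r.
    eapply Rle_trans; [apply Hb|]. unfold l1norm; simpl. rewrite Rmult_0_r, exp_0; lra.
  - destruct (IH K HK) as [M1 [HM1 H1]].
    destruct (IH (2 * K) ltac:(lra)) as [M2 [_ H2]].
    destruct (H2 (1 + 2 * K) _ ltac:(lra) (exp_l1norm_exp_lipschitz m K HK)) as [IB [HIB _]].
    assert (IB0 : 0 <= IB) by (eapply iter_int_density_nonneg; [|exact HIB]; intros; apply Rlt_le, exp_pos).
    set (E0 := exp ((2 * K + 1) ^ 2 / 2)). assert (HE0 : 0 < E0) by apply exp_pos.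
    exists (2 * (M1 * E0)); split; [nra|].
    intros C f HC Hf.
    assert (Ex : forall t, exists I, iter_int m (fun z => f (vcons t z) * std_gauss_density m z) I /\
                   Rabs I <= C * exp (2 * K * Rabs t) * M1).
    { intros t. apply H1; [generalize (exp_pos (2 * K * Rabs t)); nra | apply exp_lipschitz_vcons; auto]. }
    destruct (functional_choice _ Ex) as [h Hh].
    assert (Hc : forall t, continuous h t).
    { apply (continuous_of_exp_lipschitz h (C * IB) K); [nra | auto |].
      apply (partial_integral_lipschitz m C K f h IB Hf); [intros; apply Hh | exact HIB]. }
    set (g := fun t => normal_pdf t * h t).
    assert (Gc : forall t, continuous g t)
      by (intros; apply (continuous_mult normal_pdf h); [apply normal_pdf_cont | apply Hc]).
    assert (Gb : forall t, Rabs (g t) <= (C * M1 * E0) * exp_abs t).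
    { intros t. unfold g. rewrite Rabs_mult, (Rabs_right (normal_pdf t)) by (apply Rle_ge, Rlt_le, normal_pdf_pos).
      generalize (normal_pdf_exp_le (2 * K) t) (normal_pdf_pos t) (proj2 (Hh t)); fold E0; intros.
      apply Rle_trans with (normal_pdf t * (C * exp (2 * K * Rabs t) * M1)); [apply Rmult_le_compat_l; lra|].
      replace (normal_pdf t * (C * exp (2 * K * Rabs t) * M1)) with ((C * M1) * (normal_pdf t * exp (2 * K * Rabs t))) by ring.
      rewrite (Rmult_assoc (C * M1)). apply Rmult_le_compat_l; [nra | auto]. }
    destruct (improper_int_dominated g _ Gc Gb) as [I [HI HIb]].
    exists I; split; [|lra].
    exists g; split; auto. intros t.
    eapply iter_int_ext; [|apply (iter_int_scal m _ _ (normal_pdf t) (proj1 (Hh t)))].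
    intros z; simpl; rewrite std_gauss_density_vcons; ring.
Qed.

Lemma vmax_ge n x i : (i < n)%nat -> x i <= vmax n x.
Proof.
  induction n; intros Hi; [lia|]. simpl. destruct (Nat.eq_dec i n).
  - subst; apply Rmax_r.
  - eapply Rle_trans; [apply IHn; lia | apply Rmax_l].
Qed.

Lemma vmax_attained n x : (1 <= n)%nat -> exists j, (j < n)%nat /\ vmax n x = x j.
Proof.
  induction n; intros Hn; [lia|]. simpl. destruct n.
  - exists O; split; [lia|]. simpl; apply Rmax_left; lra.
  - destruct (IHn ltac:(lia)) as [j [Hj E]]. unfold Rmax at 1.
    destruct (Rle_dec (vmax (S n) x) (x (S n))); [exists (S n) | exists j]; split; auto; lia.
Qed.

Lemma vmax_lipschitz n x y M : (1 <= n)%nat ->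
  (forall i, (i < n)%nat -> Rabs (x i - y i) <= M) -> Rabs (vmax n x - vmax n y) <= M.
Proof.
  intros Hn HM. destruct (vmax_attained n x Hn) as [j [Hj Ej]], (vmax_attained n y Hn) as [k [Hk Ek]].
  generalize (HM j Hj) (HM k Hk) (vmax_ge n y j Hj) (vmax_ge n x k Hk); rewrite Ej, Ek; intros.
  generalize (Rle_abs (x j - y j)) (Rle_abs (- (x k - y k))); rewrite Rabs_Ropp; intros.
  apply Rabs_le; lra.
Qed.

(* The pointwise estimate behind the upper bound: with [s = sqrt L] it combines
   [s |x_j| <= ln (sum_i (e^(s x_i) + e^(- s x_i)))] with [u^2 <= 2 L (e^u - 1 - u)]
   for [u >= - L / 2]. *)
Lemma sq_le_exp_excess u L : 2 <= L -> - L / 2 <= u -> u ^ 2 <= 2 * L * (exp u - 1 - u).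
Proof.
  intros HL Hu. destruct (Rle_dec (-2) u).
  - assert ((1 + u / 2) ^ 2 <= exp u).
    { replace u with (u / 2 + u / 2) at 2 by field. rewrite exp_plus.
      generalize (exp_ineq1_le (u / 2)); intro. simpl. nra. }
    assert (0 <= u ^ 2) by apply pow2_ge_0. simpl in *; nra.
  - generalize (exp_pos u); intro. simpl; nra.
Qed.

Lemma vmax_sq_le_exp_sum d x L : (1 <= d)%nat -> 2 <= L -> exp (L / 2) <= 2 * INR d ->
  vmax d x ^ 2 <= L - 2 + 2 * exp (- L) * rsum d (fun i => exp (sqrt L * x i) + exp (- (sqrt L * x i))).
Proof.
  intros Hd HL HdL. set (s := sqrt L). assert (Hs : s * s = L) by (apply sqrt_sqrt; lra).
  set (Y := rsum d (fun i => exp (s * x i) + exp (- (s * x i)))).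
  assert (HY : exp (L / 2) <= Y).
  { eapply Rle_trans; [exact HdL|]. unfold Y; rewrite Rmult_comm, <- rsum_const.
    apply rsum_le; intros. generalize (exp_ineq1_le (s * x k)) (exp_ineq1_le (- (s * x k))); lra. }
  assert (Ypos : 0 < Y) by (generalize (exp_pos (L / 2)); lra).
  assert (lnY : L / 2 <= ln Y) by (rewrite <- (ln_exp (L / 2)); apply ln_le; auto; apply exp_pos).
  destruct (vmax_attained d x Hd) as [j [Hj E]]. rewrite E.
  assert (T : exp (s * Rabs (x j)) <= Y).
  { eapply Rle_trans; [|apply (rsum_term_le d (fun i => exp (s * x i) + exp (- (s * x i))) j Hj)].
    - simpl. generalize (exp_pos (s * x j)) (exp_pos (- (s * x j))); intros.
      destruct (Rle_dec 0 (x j)); [rewrite Rabs_right by lra | rewrite Rabs_left, <- Ropp_mult_distr_r by lra]; lra.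
    - intros k _; generalize (exp_pos (s * x k)) (exp_pos (- (s * x k))); lra. }
  assert (T2 : s * Rabs (x j) <= ln Y)
    by (rewrite <- (ln_exp (s * Rabs (x j))); apply ln_le; auto; apply exp_pos).
  assert (0 <= s * Rabs (x j)) by (apply Rmult_le_pos; [apply sqrt_pos | apply Rabs_pos]).
  set (u := ln Y - L).
  assert (K := sq_le_exp_excess u L HL ltac:(unfold u; lra)).
  assert (Eu : exp u = Y * exp (- L)) by (unfold u, Rminus; rewrite exp_plus, exp_ln; auto).
  assert (Sq : L * x j ^ 2 <= (L + u) ^ 2).
  { replace (L + u) with (ln Y) by (unfold u; ring). rewrite <- Hs, <- (pow2_abs (x j)). simpl in *; nra. }
  apply (Rmult_le_reg_l L); [lra|]. rewrite Eu in K. simpl in *; nra.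
Qed.

(** * Maxima of affine images of the standard Gaussian vector *)

Definition abs_entry_sum d (A : nat -> nat -> R) := rsum d (fun i => rsum d (fun k => Rabs (A i k))).
Definition max_affine d A (b z : nat -> R) := vmax d (fun i => matvec d A z i + b i).

Lemma abs_entry_sum_nonneg d A : 0 <= abs_entry_sum d A.
Proof. apply rsum_nonneg; intros; apply rsum_nonneg; intros; apply Rabs_pos. Qed.

Lemma abs_entry_le d A i k : (i < d)%nat -> (k < d)%nat -> Rabs (A i k) <= abs_entry_sum d A.
Proof.
  intros Hi Hk. eapply Rle_trans; [apply (rsum_term_le d (fun k => Rabs (A i k)) k Hk); intros; apply Rabs_pos|].
  apply (rsum_term_le d (fun i => rsum d (fun k => Rabs (A i k))) i Hi).
  intros; apply rsum_nonneg; intros; apply Rabs_pos.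
Qed.

Lemma matvec_abs_le d A z i : (i < d)%nat -> Rabs (matvec d A z i) <= abs_entry_sum d A * l1norm d z.
Proof.
  intros Hi. unfold matvec, l1norm. rewrite <- rsum_scal.
  eapply Rle_trans; [apply rsum_abs_le | apply rsum_le; intros k Hk].
  rewrite Rabs_mult. apply Rmult_le_compat_r; [apply Rabs_pos | apply abs_entry_le; auto].
Qed.

Lemma matvec_minus d A z z' i : matvec d A z i - matvec d A z' i = matvec d A (fun k => z k - z' k) i.
Proof. unfold matvec; rewrite <- rsum_minus; apply rsum_ext; intros; ring. Qed.

Lemma max_affine_exp_lipschitz d A b : (1 <= d)%nat ->
  exp_lipschitz d (abs_entry_sum d A + rsum d (fun i => Rabs (b i))) 1 (max_affine d A b).
Proof.
  intros Hd. set (a := abs_entry_sum d A). set (nb := rsum d (fun i => Rabs (b i))).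
  assert (Ha : 0 <= a) by apply abs_entry_sum_nonneg.
  assert (Hb : 0 <= nb) by (apply rsum_nonneg; intros; apply Rabs_pos).
  split.
  - intros z. unfold max_affine. destruct (vmax_attained d (fun i => matvec d A z i + b i) Hd) as [j [Hj E]].
    rewrite E, Rmult_1_l. eapply Rle_trans; [apply Rabs_triang|].
    generalize (matvec_abs_le d A z j Hj) (l1norm_nonneg d z) (exp_ineq1_le (l1norm d z))
      (rsum_term_le d (fun i => Rabs (b i)) j Hj ltac:(intros; apply Rabs_pos)); fold a nb; intros.
    assert ((a + nb) * (1 + l1norm d z) <= (a + nb) * exp (l1norm d z)) by (apply Rmult_le_compat_l; lra).
    nra.
  - intros z z'. unfold max_affine. apply vmax_lipschitz; auto. intros i Hi.
    replace (matvec d A z i + b i - (matvec d A z' i + b i)) with (matvec d A z i - matvec d A z' i) by ring.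
    rewrite matvec_minus. eapply Rle_trans; [apply matvec_abs_le; auto|].
    generalize (l1dist_nonneg d z z') (l1norm_nonneg d z) (l1norm_nonneg d z')
      (exp_ineq1_le (1 * (l1norm d z + l1norm d z'))); intros.
    apply Rmult_le_compat_r; [exact H|]. fold a. nra.
Qed.

Lemma exp_lipschitz_sq n C F : 0 <= C -> exp_lipschitz n C 1 F ->
  exp_lipschitz n (2 * C * C) 2 (fun z => F z ^ 2).
Proof.
  intros HC [Hb Hl]. split.
  - intros z. rewrite <- RPow_abs. generalize (Hb z) (Rabs_pos (F z)); rewrite Rmult_1_l; intros.
    replace (2 * l1norm n z) with (l1norm n z + l1norm n z) by ring. rewrite exp_plus.
    generalize (exp_pos (l1norm n z)); intro. simpl; nra.
  - intros z z'. set (S := l1norm n z + l1norm n z').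
    replace (F z ^ 2 - F z' ^ 2) with ((F z + F z') * (F z - F z')) by ring. rewrite Rabs_mult.
    generalize (Hb z) (Hb z') (Hl z z'); rewrite !Rmult_1_l; fold S; intros B1 B2 L.
    assert (exp (l1norm n z) <= exp S /\ exp (l1norm n z') <= exp S) as [].
    { generalize (l1norm_nonneg n z) (l1norm_nonneg n z'); split; apply exp_le; unfold S; lra. }
    assert (A : Rabs (F z + F z') <= 2 * C * exp S) by (eapply Rle_trans; [apply Rabs_triang | nra]).
    replace (2 * S) with (S + S) by ring. rewrite exp_plus.
    apply Rle_trans with ((2 * C * exp S) * (C * exp S * l1dist n z z'));
      [apply Rmult_le_compat; auto; apply Rabs_pos | right; ring].
Qed.

(* Expanding [E (F - E F - lam (G - E G))^2 >= 0]. *)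
Lemma iter_int_variance_ge n F G EF EF2 EG EG2 EFG lam :
  iter_int n (fun z => F z * std_gauss_density n z) EF ->
  iter_int n (fun z => F z ^ 2 * std_gauss_density n z) EF2 ->
  iter_int n (fun z => G z * std_gauss_density n z) EG ->
  iter_int n (fun z => G z ^ 2 * std_gauss_density n z) EG2 ->
  iter_int n (fun z => F z * G z * std_gauss_density n z) EFG ->
  2 * lam * (EFG - EF * EG) - lam ^ 2 * (EG2 - EG ^ 2) <= EF2 - EF ^ 2.
Proof.
  intros HF HF2 HG HG2 HFG. set (a := EF - lam * EG).
  assert (Hsq := iter_int_plus n _ _ _ _ HF2 (iter_int_plus n _ _ _ _ (iter_int_scal n _ _ (lam ^ 2) HG2)
    (iter_int_plus n _ _ _ _ (iter_int_const_density n (a ^ 2)) (iter_int_plus n _ _ _ _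
    (iter_int_scal n _ _ (-2 * lam) HFG) (iter_int_plus n _ _ _ _
    (iter_int_scal n _ _ (-2 * a) HF) (iter_int_scal n _ _ (2 * a * lam) HG)))))).
  apply (iter_int_ext _ _ (fun z => (F z - lam * G z - a) ^ 2 * std_gauss_density n z)) in Hsq;
    [|intros z; cbv beta; ring].
  apply iter_int_density_nonneg in Hsq; [|intros; apply pow2_ge_0].
  unfold a in Hsq. nra.
Qed.

Section MaxOfStandardNormals.

Variables (d : nat) (A : nat -> nat -> R).
Hypothesis d_ge_3 : (3 <= d)%nat.
Hypothesis row_unit : forall i, (i < d)%nat -> rsum d (fun k => A i k ^ 2) = 1.

Lemma d_ge_1 : (1 <= d)%nat.
Proof. lia. Qed.

Lemma INR_d_ge_3 : 3 <= INR d.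
Proof. replace 3 with (INR 3) by (simpl; ring). apply le_INR; auto. Qed.

Lemma iter_int_exp_coord i c : (i < d)%nat ->
  iter_int d (fun z => exp (c * matvec d A z i) * std_gauss_density d z) (exp (c ^ 2 / 2)).
Proof.
  intros Hi. assert (K := iter_int_exp_linear d (fun k => c * A i k)); cbv beta in K.
  replace (rsum d (fun k => (c * A i k) ^ 2)) with (c ^ 2) in K.
  - eapply iter_int_ext; [|exact K]. intros z; cbv beta.
    unfold matvec; rewrite <- rsum_scal. do 3 f_equal.
    apply functional_extensionality; intros; ring.
  - rewrite <- (Rmult_1_r (c ^ 2)) at 1. rewrite <- (row_unit i Hi), <- rsum_scal.
    apply rsum_ext; intros; ring.
Qed.

Lemma vmax_matvec_max_affine z : vmax d (matvec d A z) = max_affine d A (fun _ => 0) z.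
Proof. unfold max_affine; f_equal; apply functional_extensionality; intros; ring. Qed.

Lemma ex_moments_vmax : exists E1 E2,
  iter_int d (fun z => vmax d (matvec d A z) * std_gauss_density d z) E1 /\
  iter_int d (fun z => vmax d (matvec d A z) ^ 2 * std_gauss_density d z) E2.
Proof.
  set (C := abs_entry_sum d A + rsum d (fun i => Rabs ((fun _ => 0) i))).
  assert (HC : 0 <= C) by (unfold C; rewrite (rsum_ext _ _ (fun _ => 0)), rsum_const;
    [generalize (abs_entry_sum_nonneg d A); lra | intros; apply Rabs_R0]).
  assert (Hf := max_affine_exp_lipschitz d A (fun _ => 0) d_ge_1).
  destruct (ex_iter_int_exp_lipschitz d 1 ltac:(lra)) as [M1 [_ H1]].
  destruct (ex_iter_int_exp_lipschitz d 2 ltac:(lra)) as [M2 [_ H2]].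
  destruct (H1 C _ HC Hf) as [E1 [HE1 _]].
  destruct (H2 (2 * C * C) _ ltac:(nra) (exp_lipschitz_sq d C _ HC Hf)) as [E2 [HE2 _]].
  exists E1, E2; split; [eapply iter_int_ext; [|exact HE1] | eapply iter_int_ext; [|exact HE2]];
    intros z; cbv beta; rewrite vmax_matvec_max_affine; reflexivity.
Qed.

Lemma second_moment_vmax_le E2 :
  iter_int d (fun z => vmax d (matvec d A z) ^ 2 * std_gauss_density d z) E2 ->
  E2 <= 2 * ln (2 * INR d).
Proof.
  intros HE2. generalize INR_d_ge_3; intro.
  set (L := 2 * ln (2 * INR d)). set (s := sqrt L).
  assert (HL : 2 <= L).
  { assert (1 <= ln (2 * INR d)) by (rewrite <- (ln_exp 1); apply ln_le; [apply exp_pos | generalize exp_le_3; lra]).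
    unfold L; lra. }
  assert (eL : exp (L / 2) = 2 * INR d) by (unfold L; replace (2 * ln (2 * INR d) / 2) with (ln (2 * INR d)) by field; apply exp_ln; lra).
  assert (eL' : exp (s ^ 2 / 2) = 2 * INR d)
    by (unfold s; rewrite <- Rsqr_pow2, Rsqr_sqrt by lra; exact eL).
  assert (Hsum : iter_int d (fun z => rsum d (fun i => (exp (s * matvec d A z i) + exp (- (s * matvec d A z i)))
                                                     * std_gauss_density d z))
                   (rsum d (fun _ => 2 * INR d + 2 * INR d))).
  { apply iter_int_rsum; intros i Hi.
    assert (K := iter_int_plus d _ _ _ _ (iter_int_exp_coord i s Hi) (iter_int_exp_coord i (- s) Hi)).
    replace ((- s) ^ 2) with (s ^ 2) in K by ring. rewrite eL' in K.
    eapply iter_int_ext; [|exact K]. intros z; cbv beta. rewrite Ropp_mult_distr_l; ring. }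
  assert (Hbound := iter_int_plus d _ _ _ _ (iter_int_const_density d (L - 2))
                      (iter_int_scal d _ _ (2 * exp (- L)) Hsum)).
  assert (Hle : E2 <= (L - 2) + 2 * exp (- L) * rsum d (fun _ => 2 * INR d + 2 * INR d)).
  { eapply iter_int_le; [|exact HE2 | exact Hbound]. intros z; cbv beta.
    generalize (std_gauss_density_pos d z)
      (vmax_sq_le_exp_sum d (matvec d A z) L d_ge_1 HL ltac:(lra)); fold s; intros.
    rewrite (rsum_ext _ _ (fun i => std_gauss_density d z * (exp (s * matvec d A z i) + exp (- (s * matvec d A z i)))))
      by (intros; ring).
    rewrite rsum_scal. nra. }
  rewrite rsum_const in Hle.
  replace (exp (- L)) with (/ (2 * INR d * (2 * INR d))) in Hle.
  - fold L. replace (L - 2 + 2 * / (2 * INR d * (2 * INR d)) * (INR d * (2 * INR d + 2 * INR d)))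
      with L in Hle by (field; lra). exact Hle.
  - rewrite exp_Ropp, <- eL, <- exp_plus. f_equal; f_equal; field.
Qed.

Lemma mean_max_affine_ge b J :
  iter_int d (fun z => max_affine d A b z * std_gauss_density d z) J -> b O <= J.
Proof.
  intros HJ. rewrite <- (Rplus_0_l (b O)).
  eapply iter_int_le; [|exact (iter_int_plus d _ _ _ _ (iter_int_linear d (A O)) (iter_int_const_density d (b O))) | exact HJ].
  intros z; cbv beta. generalize (std_gauss_density_pos d z)
    (vmax_ge d (fun i => matvec d A z i + b i) O ltac:(lia)); intros.
  unfold max_affine, matvec in *. nra.
Qed.

(* By Cameron--Martin, tilting by [exp (c X_0)] shifts [X] by [c] times the first
   column of [V]; the shifted maximum is at least [X_0 + c]. *)
Lemma tilted_mean_vmax c : exists J, c <= J /\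
  iter_int d (fun z => vmax d (matvec d A z) * exp (c * matvec d A z O) * std_gauss_density d z)
    (exp (c ^ 2 / 2) * J).
Proof.
  set (a := fun k => c * A O k). set (b := matvec d A a).
  assert (Hb0 : b O = c).
  { unfold b, matvec, a. transitivity (c * rsum d (fun k => A O k ^ 2)).
    - rewrite <- rsum_scal; apply rsum_ext; intros; ring.
    - rewrite row_unit by lia; ring. }
  set (C := abs_entry_sum d A + rsum d (fun i => Rabs (b i))).
  assert (HC : 0 <= C) by (generalize (abs_entry_sum_nonneg d A) (rsum_nonneg d (fun i => Rabs (b i)) ltac:(intros; apply Rabs_pos)); unfold C; lra).
  destruct (ex_iter_int_exp_lipschitz d 1 ltac:(lra)) as [M [_ HM]].
  destruct (HM C _ HC (max_affine_exp_lipschitz d A b d_ge_1)) as [J [HJ _]].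
  exists J; split; [rewrite <- Hb0; exact (mean_max_affine_ge b J HJ)|].
  assert (Hshift : forall z, max_affine d A b z = vmax d (matvec d A (vshift d z a))).
  { intros z. unfold max_affine, b. f_equal. apply functional_extensionality; intros i.
    unfold matvec. rewrite <- rsum_plus. apply rsum_ext; intros k Hk. unfold vshift.
    rewrite (proj2 (Nat.ltb_lt k d) Hk). ring. }
  assert (CM := iter_int_cameron_martin d (fun x => vmax d (matvec d A x)) a J
                  (iter_int_ext _ _ _ _ (fun z => f_equal (fun y => y * _) (Hshift z)) HJ)).
  replace (rsum d (fun k => a k ^ 2)) with (c ^ 2) in CM.
  - eapply iter_int_ext; [|exact CM]. intros z; cbv beta. do 3 f_equal.
    unfold matvec, a; rewrite <- rsum_scal; apply rsum_ext; intros; ring.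
  - rewrite <- (Rmult_1_r (c ^ 2)) at 1. rewrite <- (row_unit O ltac:(lia)), <- rsum_scal.
    apply rsum_ext; intros; unfold a; ring.
Qed.

Lemma variance_vmax_ge E1 E2 :
  iter_int d (fun z => vmax d (matvec d A z) * std_gauss_density d z) E1 ->
  iter_int d (fun z => vmax d (matvec d A z) ^ 2 * std_gauss_density d z) E2 ->
  exp (- (sqrt (2 * ln (2 * INR d)) + 1) ^ 2) <= E2 - E1 ^ 2.
Proof.
  intros HE1 HE2. set (L := 2 * ln (2 * INR d)). set (s := sqrt L). set (c := s + 1).
  set (h := fun z => vmax d (matvec d A z)). set (G := fun z => exp (c * matvec d A z O)).
  assert (HL : 0 <= L).
  { generalize INR_d_ge_3; intro. assert (0 <= ln (2 * INR d)) by (rewrite <- ln_1; apply ln_le; lra).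
    unfold L; lra. }
  assert (Hs : s * s = L) by (apply sqrt_sqrt; auto). assert (0 <= s) by apply sqrt_pos.
  assert (HE2h : iter_int d (fun z => h z * h z * std_gauss_density d z) E2)
    by (eapply iter_int_ext; [|exact HE2]; intros; unfold h; ring).
  assert (Hmean : E1 <= s).
  { generalize (iter_int_variance_ge d h h E1 E2 E1 E2 E2 0 HE1 HE2 HE1 HE2 HE2h)
      (second_moment_vmax_le E2 HE2); fold L; intros. simpl in *; nra. }
  assert (HG := iter_int_exp_coord O c ltac:(lia)).
  assert (HG2 : iter_int d (fun z => G z ^ 2 * std_gauss_density d z) (exp ((2 * c) ^ 2 / 2))).
  { eapply iter_int_ext; [|exact (iter_int_exp_coord O (2 * c) ltac:(lia))]. intros z; unfold G.
    replace (2 * c * matvec d A z O) with (c * matvec d A z O + c * matvec d A z O) by ring.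
    rewrite exp_plus; ring. }
  destruct (tilted_mean_vmax c) as [J [HJ HhG]].
  set (lam := exp (- (3 * c ^ 2 / 2))).
  assert (Hcov := iter_int_variance_ge d h G E1 E2 _ _ _ lam HE1 HE2 HG HG2 HhG).
  assert (E : lam * exp (c ^ 2 / 2) = exp (- c ^ 2) /\ lam ^ 2 * exp ((2 * c) ^ 2 / 2) = exp (- c ^ 2)).
  { unfold lam; split; [|replace (exp (- (3 * c ^ 2 / 2)) ^ 2) with (exp (- (3 * c ^ 2 / 2)) * exp (- (3 * c ^ 2 / 2))) by ring];
    rewrite <- !exp_plus; f_equal; field. }
  destruct E as [E E'].
  generalize (exp_pos (- c ^ 2)) (pow2_ge_0 (lam * exp (c ^ 2 / 2))); intros.
  replace (2 * lam * (exp (c ^ 2 / 2) * J - E1 * exp (c ^ 2 / 2)) - lam ^ 2 * (exp ((2 * c) ^ 2 / 2) - exp (c ^ 2 / 2) ^ 2))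
    with (2 * (lam * exp (c ^ 2 / 2)) * (J - E1) - lam ^ 2 * exp ((2 * c) ^ 2 / 2) + (lam * exp (c ^ 2 / 2)) ^ 2)
    in Hcov by ring.
  rewrite E, E' in Hcov. unfold c in *. nra.
Qed.

End MaxOfStandardNormals.

Lemma exp_neg_sq_ge_inv_pow d : (3 <= d)%nat ->
  / (INR d ^ 15 * sqrt (2 * PI)) <= exp (- (sqrt (2 * ln (2 * INR d)) + 1) ^ 2).
Proof.
  intros Hd. assert (HdR : 3 <= INR d) by (replace 3 with (INR 3) by (simpl; ring); apply le_INR; auto).
  assert (lnd : 1 <= ln (INR d))
    by (rewrite <- (ln_exp 1); apply ln_le; [apply exp_pos | generalize exp_le_3; lra]).
  assert (ln2 : ln 2 <= ln (INR d)) by (apply ln_le; lra).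
  assert (0 <= ln 2) by (rewrite <- ln_1; apply ln_le; lra).
  set (L := 2 * ln (2 * INR d)).
  assert (HL : L = 2 * ln 2 + 2 * ln (INR d)) by (unfold L; rewrite ln_mult; lra).
  assert (sqrt L * sqrt L = L) by (apply sqrt_sqrt; lra). assert (0 <= sqrt L) by apply sqrt_pos.
  assert (Hsq : (sqrt L + 1) ^ 2 <= 15 * ln (INR d))
    by (generalize (pow2_ge_0 (sqrt L - 1)); simpl; nra).
  assert (P : 0 < INR d ^ 15) by (apply pow_lt; lra).
  apply Rle_trans with (exp (- (15 * ln (INR d)))); [|apply exp_le; lra].
  assert (Ep : exp (15 * ln (INR d)) = INR d ^ 15).
  { replace 15 with (INR 15) by (simpl; ring). rewrite <- ln_pow by lra. apply exp_ln; auto. }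
  rewrite exp_Ropp, Ep. apply Rinv_le_contravar; [auto|].
  rewrite <- (Rmult_1_r (INR d ^ 15)) at 1. apply Rmult_le_compat_l; [lra | apply sqrt_2PI_ge_1].
Qed.

Theorem mainTheorem16 (d : nat) (V A : nat -> nat -> R) :
  (3 <= d)%nat ->
  correlation_matrix d V ->
  (forall i j, (i < d)%nat -> (j < d)%nat -> V i j = rsum d (fun k => A i k * A j k)) ->
  exists E1 E2 : R,
    gauss_expect d A (fun x => vmax d x) E1 /\
    gauss_expect d A (fun x => (vmax d x)^2) E2 /\
    E2 <= 6 * ln (INR d) /\
    E2 - E1^2 >= / (INR d ^ 15 * sqrt (2 * PI)).
Proof.
  intros Hd [_ [_ Hdiag]] HVA.
  assert (Hrow : forall i, (i < d)%nat -> rsum d (fun k => A i k ^ 2) = 1).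
  { intros i Hi. rewrite <- (Hdiag i Hi), (HVA i i Hi Hi). apply rsum_ext; intros; ring. }
  destruct (ex_moments_vmax d A Hd) as (E1 & E2 & HE1 & HE2).
  exists E1, E2; split; [exact HE1|]; split; [exact HE2|]; split.
  - assert (HdR := INR_d_ge_3 d Hd).
    assert (ln (2 * INR d) <= 2 * ln (INR d)).
    { rewrite ln_mult by lra. generalize (ln_le 2 (INR d) ltac:(lra) ltac:(lra)); lra. }
    assert (0 <= ln (INR d)) by (rewrite <- ln_1; apply ln_le; lra).
    generalize (second_moment_vmax_le d A Hd Hrow E2 HE2); lra.
  - apply Rle_ge. eapply Rle_trans; [apply exp_neg_sq_ge_inv_pow; auto|].
    apply (variance_vmax_ge d A Hd Hrow); auto.
Qed.
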